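(* Let $(M,d,+)$ be a metric semigroup, $f:I_a^b\to M$, $x,y\in I_a^b$ with $x<y$, and $x'\in I_x^y$. Define $\lambda,\mu\in\mathbb N_0^n$ by $\lambda_i=1$ if $x_i=x_i'$, $\lambda_i=0$ if $x_i<x_i'$; and $\mu_i=0$ if $x_i'=y_i$, $\mu_i=1$ if $x_i'<y_i$. Then $\lambda\le\mu$, $$I_x^y=\bigcup_{\alpha\in\mathbb N_0^n,\ \lambda\le\alpha\le\mu}I_{x+\alpha(x'-x)}^{x'+\alpha(y-x')},$$ where the rectangles in the union are non-degenerate with pairwise disjoint interiors, and $$\mathrm{md}_n(f,I_x^y)\le\sum_{\lambda\le\alpha\le\mu}\mathrm{md}_n\big(f,I_{x+\alpha(x'-x)}^{x'+\alpha(y-x')}\big).$$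
   Context: Fix $n\in\mathbb N$ and $a,b\in\mathbb R^n$ with $a<b$. Inequalities between points of $\mathbb R^n$ or multiindices are componentwise; $0$ and $1$ denote $(0,\dots,0)$ and $(1,\dots,1)$; for $x\le y$, $I_x^y=\prod_{i=1}^n[x_i,y_i]$; for $\theta\in\mathbb N_0^n$, $\theta x=(\theta_1x_1,\dots,\theta_nx_n)$, $|\theta|=\sum\theta_i$; $\mathcal E(n)$, $\mathcal O(n)$ are the sets of $\theta\in\mathbb N_0^n$, $\theta\le1$, with $|\theta|$ even, resp. odd. A metric semigroup $(M,d,+)$ is a metric space with an Abelian semigroup operation $+$ such that $d(u+w,v+w)=d(u,v)$. For $x\le y$ in $I_a^b$, $\mathrm{md}_n(f,I_x^y)=d\big(\sum_{\theta\in\mathcal E(n)}f(x+\theta(y-x)),\sum_{\eta\in\mathcal O(n)}f(x+\eta(y-x))\big)$. *)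

From Stdlib Require Import Reals.
From mathcomp Require Import all_boot.
Local Open Scope R_scope.
Set Implicit Arguments.
Unset Strict Implicit.
Unset Printing Implicit Defensive.

Record MetricSemigroup := {
  ms_car :> Type;
  ms_d : ms_car -> ms_car -> R;
  ms_add : ms_car -> ms_car -> ms_car;
  ms_d_eq0 : forall u v, ms_d u v = R0 <-> u = v;
  ms_d_sym : forall u v, ms_d u v = ms_d v u;
  ms_d_tri : forall u v w, (ms_d u w <= ms_d u v + ms_d v w);
  ms_addA : forall u v w, ms_add u (ms_add v w) = ms_add (ms_add u v) w;
  ms_addC : forall u v, ms_add u v = ms_add v u;
  ms_d_trans : forall u v w, ms_d (ms_add u w) (ms_add v w) = ms_d u v
}.

Definition pt (n : nat) := 'I_n -> R.

(* Multiindices theta in N_0^n with theta <= 1 are encoded as boolean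
   finite functions; theta_i = nat_of_bool (theta i). *)
Definition mind (n : nat) := {ffun 'I_n -> bool}.

Definition smul n (th : mind n) (x : pt n) : pt n :=
  fun i => (INR (nat_of_bool (th i)) * x i).
Definition padd n (x y : pt n) : pt n := fun i => (x i + y i).
Definition psub n (x y : pt n) : pt n := fun i => (x i - y i).

Definition mabs n (th : mind n) : nat := \sum_(i < n) nat_of_bool (th i).

Definition Ecal n : seq (mind n) := [seq th <- enum {: mind n} | ~~ odd (mabs th)].
Definition Ocal n : seq (mind n) := [seq th <- enum {: mind n} | odd (mabs th)].

(* Sum in the (possibly identity-free) semigroup of a nonempty list;
   the default d0 is only used for the empty list (never, for n >= 1). *)
Definition sgsum (M : MetricSemigroup) (d0 : M) (s : seq M) : M :=
  match s with
  | [::] => d0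
  | h :: t => foldl (@ms_add M) h t
  end.

Definition md (M : MetricSemigroup) n (f : pt n -> M) (x y : pt n) : R :=
  @ms_d M (sgsum (f x) [seq f (padd x (smul th (psub y x))) | th <- Ecal n])
         (sgsum (f x) [seq f (padd x (smul et (psub y x))) | et <- Ocal n]).

Definition inI n (x y z : pt n) : Prop := forall i, (x i <= z i <= y i).
Definition inIo n (x y z : pt n) : Prop := forall i, (x i < z i < y i).

Definition mle n (al be : mind n) : Prop :=
  forall i, (nat_of_bool (al i) <= nat_of_bool (be i))%N.

Definition lam n (x x' : pt n) : mind n :=
  [ffun i => if Req_EM_T (x i) (x' i) then true else false].
Definition mu n (x' y : pt n) : mind n :=
  [ffun i => if Req_EM_T (x' i) (y i) then false else true].

Definition lo n (x x' : pt n) (al : mind n) : pt n := padd x (smul al (psub x' x)).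
Definition hi n (x' y : pt n) (al : mind n) : pt n := padd x' (smul al (psub y x')).

(** Label every corner of
    every subrectangle by its position, coordinate by coordinate, among
    [x_i], [x'_i], [y_i]. In each coordinate, the alternating sum of the
    endpoints of [[x_i, y_i]] equals the sum of the alternating sums over
    its (one or two) pieces, the shared endpoint [x'_i] cancelling; taking
    products over the coordinates, the multiset of even corners of [I_x^y]
    together with the odd corners of all subrectangles coincides with the
    multiset of odd corners of [I_x^y] together with the even corners of all
    subrectangles. Summing [f] over both multisets in [M] and using
    translation invariance and the triangle inequality for [d] gives the
    estimate. *)

From Stdlib Require Import Reals Lra FunctionalExtensionality.
From mathcomp Require Import all_boot all_algebra.
Set Implicit Arguments. Unset Strict Implicit. Unset Printing Implicit Defensive.

Section CornerCodes.
Import GRing.Theory Num.Theory.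
Local Open Scope ring_scope.
Variable n : nat.

(* A code [g] names the point whose [i]-th coordinate is the [g i]-th of
   [x_i, x'_i, y_i]. *)
Definition code := {ffun 'I_n -> nat}.

Definition signed_count (h : mind n -> code) (g : code) : int :=
  (count_mem g (map h (Ecal n)))%:R - (count_mem g (map h (Ocal n)))%:R.

Lemma count_mem_map_filter (h : mind n -> code) g (q : pred (mind n)) :
  count_mem g [seq h th | th <- enum {: mind n} & q th] =
  (\sum_(th | q th) (h th == g))%N.
Proof.
rewrite count_map count_filter -sum1_count big_enum_cond big_mkcond [RHS]big_mkcond /=.
by apply: eq_bigr => th _; case: (q th); case: (h th == g); rewrite ?andbF.
Qed.

Lemma signed_countE h g :
  signed_count h g = \sum_(th : mind n) (-1) ^+ mabs th * (h th == g)%:R.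
Proof.
rewrite /signed_count /Ecal /Ocal !count_mem_map_filter !natr_sum.
rewrite [RHS](bigID (fun th => odd (mabs th))) /= addrC -sumrN.
congr (_ + _); apply: eq_bigr => th.
  by move/negbTE=> even_th; rewrite -signr_odd even_th mul1r.
by move=> odd_th; rewrite -signr_odd odd_th mulN1r.
Qed.

Lemma sign_mabs (th : mind n) : (-1) ^+ mabs th = \prod_i (-1) ^+ th i :> int.
Proof. exact: (big_morph _ (exprD _) (expr0 _)). Qed.

Lemma eq_ffun_prod (c g : code) : (c == g)%:R = \prod_i (c i == g i)%:R :> int.
Proof.
have [->|neq_cg] := eqVneq c g; first by rewrite big1 // => i _; rewrite eqxx.
have [i neq_i|] := pickP (fun i => c i != g i).
  by rewrite (bigD1 i) //= (negbTE neq_i) mul0r.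
by move=> eq_cg; case/eqP: neq_cg; apply/ffunP => i; apply/eqP/negbFE/eq_cg.
Qed.

Lemma signed_count_prod (c : 'I_n -> bool -> nat) g :
  signed_count (fun th => [ffun i => c i (th i)]) g =
  \prod_i \sum_(t : bool) (-1) ^+ t * (c i t == g i)%:R.
Proof.
rewrite signed_countE bigA_distr_bigA; apply: eq_bigr => th _.
rewrite sign_mabs eq_ffun_prod -big_split; apply: eq_bigr => i _.
by rewrite ffunE.
Qed.

(* If [x_i = x'_i] ([l]) or [x'_i = y_i] ([~~ m]), the rectangle is not cut in
   direction [i] and the coordinate is coded as an endpoint of [[x_i, y_i]]. *)
Definition sub_coord (l m a t : bool) : nat :=
  if l || ~~ m then (2 * t)%N else (a + t)%N.

Definition corner_code (th : mind n) : code := [ffun i => (2 * th i)%N].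

Definition sub_code (lam mu al th : mind n) : code :=
  [ffun i => sub_coord (lam i) (mu i) (al i) (th i)].

Lemma signed_sub_coord (l m : bool) k : (l <= m)%N ->
  \sum_(t : bool) (-1) ^+ t * ((2 * t)%N == k)%:R =
  \sum_(a : bool | (l <= a <= m)%N)
    \sum_(t : bool) (-1) ^+ t * (sub_coord l m a t == k)%:R :> int.
Proof.
by case: l; case: m => //= _; rewrite [RHS]big_mkcond !big_bool /sub_coord /=;
  case: k => [|[|[|k]]]; rewrite /= ?expr0 ?expr1.
Qed.

Lemma signed_count_split (lam mu : mind n) g : (forall i, lam i <= mu i)%N ->
  signed_count corner_code g =
  \sum_(al : mind n | [forall i, lam i <= al i <= mu i]%N) signed_count (sub_code lam mu al) g.
Proof.
move=> le_lam_mu; rewrite (signed_count_prod (fun _ t => 2 * t)%N).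
under eq_bigr => i _ do rewrite (signed_sub_coord _ (le_lam_mu i)).
rewrite bigA_distr_big_dep; apply: eq_big => [al|al _].
  by apply/familyP/forallP.
by rewrite (signed_count_prod (fun i => sub_coord (lam i) (mu i) (al i))).
Qed.

Definition box (lam mu : mind n) : seq (mind n) :=
  [seq al <- index_enum (mind n) | [forall i, lam i <= (al : mind n) i <= mu i]%N].

Lemma perm_corner_codes (lam mu : mind n) : (forall i, lam i <= mu i)%N ->
  perm_eq
    (map corner_code (Ecal n) ++ flatten [seq map (sub_code lam mu al) (Ocal n) | al <- box lam mu])
    (map corner_code (Ocal n) ++ flatten [seq map (sub_code lam mu al) (Ecal n) | al <- box lam mu]).
Proof.
move=> le_lam_mu; apply/allP => g _; apply/eqP.
rewrite !count_cat !count_flatten !sumnE !big_map !big_filter.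
apply/eqP; rewrite -(@eqr_nat int) !natrD !natr_sum.
have := signed_count_split g le_lam_mu; rewrite /signed_count sumrB => eq_diff.
by rewrite -subr_eq0 opprD addrACA eq_diff addrA subrK subrr.
Qed.

Lemma box_lam (lam mu : mind n) : (forall i, lam i <= mu i)%N -> lam \in box lam mu.
Proof.
move=> le_lam_mu; rewrite mem_filter mem_index_enum andbT.
by apply/forallP => i; rewrite leqnn le_lam_mu.
Qed.

End CornerCodes.

Lemma Ecal_neq_nil n : Ecal n <> [::].
Proof.
have : [ffun=> false] \in Ecal n.
  by rewrite mem_filter mem_enum andbT /mabs big1 // => i _; rewrite ffunE.
by case: (Ecal n).
Qed.

Lemma Ocal_neq_nil n : (0 < n)%N -> Ocal n <> [::].
Proof.
move=> n_gt0; have : [ffun i => i == Ordinal n_gt0] \in Ocal n.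
  rewrite mem_filter mem_enum andbT /mabs (bigD1 (Ordinal n_gt0)) //= ffunE eqxx.
  by rewrite big1 // => j /negbTE neq_j; rewrite ffunE neq_j.
by case: (Ocal n).
Qed.

Lemma map_neq_nil T U (g : T -> U) (s : seq T) : s <> [::] -> map g s <> [::].
Proof. by case: s. Qed.

Lemma flatten_map_neq_nil I T (r : seq I) (G : I -> seq T) :
  r <> [::] -> (forall i, G i <> [::]) -> flatten (map G r) <> [::].
Proof. by case: r => // i r _ /(_ i) /=; case: (G i). Qed.

Local Open Scope R_scope.

Section MetricSemigroupSums.
Variables (M : MetricSemigroup) (d0 : M).
Local Notation oadd := (oAC (@ms_addA M) (@ms_addC M)).

Lemma big_oadd_Some (s : seq M) : s <> [::] ->
  \big[oadd/None]_(u <- s) Some u = Some (sgsum d0 s).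
Proof.
case: s => // u s _; rewrite big_cons /=.
elim: s u => [|v s IH] u; first by rewrite big_nil.
by rewrite big_cons Monoid.mulmA /= -IH.
Qed.

Lemma sgsum_default d1 (s : seq M) : s <> [::] -> sgsum d0 s = sgsum d1 s.
Proof. by case: s. Qed.

Lemma sgsum_perm (T : eqType) (F : T -> M) (s t : seq T) :
  perm_eq s t -> s <> [::] -> sgsum d0 (map F s) = sgsum d0 (map F t).
Proof.
move=> perm_st s_ne.
have t_ne : t <> [::].
  by move=> t_nil; apply: s_ne; apply/nilP; rewrite /nilp (perm_size perm_st) t_nil.
apply: Some_inj; rewrite -!big_oadd_Some; last 2 first.
- by case: t t_ne {perm_st}.
- by case: s s_ne {perm_st}.
by rewrite !big_map; apply: perm_big.
Qed.

Lemma sgsum_cat (s t : seq M) : s <> [::] -> t <> [::] ->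
  sgsum d0 (s ++ t) = ms_add (sgsum d0 s) (sgsum d0 t).
Proof.
move=> s_ne t_ne; have st_ne : s ++ t <> [::] by case: s s_ne.
by apply: Some_inj; rewrite -!big_oadd_Some // big_cat /= !big_oadd_Some.
Qed.

Lemma sgsum_cons u (s : seq M) : s <> [::] -> sgsum d0 (u :: s) = ms_add u (sgsum d0 s).
Proof. exact: (@sgsum_cat [:: u]). Qed.

Lemma sgsum_flatten I (r : seq I) (G : I -> seq M) :
  r <> [::] -> (forall i, G i <> [::]) ->
  sgsum d0 (flatten (map G r)) = sgsum d0 [seq sgsum d0 (G i) | i <- r].
Proof.
move=> r_ne G_ne; have Gr_ne : [seq sgsum d0 (G i) | i <- r] <> [::] by case: r r_ne.
apply: Some_inj; rewrite -!big_oadd_Some //; last exact: flatten_map_neq_nil.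
by rewrite big_flatten !big_map; apply: eq_bigr => i _; rewrite big_oadd_Some.
Qed.

Lemma ms_d_add_le (u v p q : M) :
  ms_d (ms_add u p) (ms_add v q) <= ms_d u v + ms_d p q.
Proof.
apply: Rle_trans (ms_d_tri _ (ms_add v p) _) _.
rewrite ms_d_trans (ms_addC v p) (ms_addC v q) ms_d_trans; lra.
Qed.

Lemma ms_d_sgsum_le I (r : seq I) (F G : I -> M) : r <> [::] ->
  ms_d (sgsum d0 (map F r)) (sgsum d0 (map G r)) <=
  \big[Rplus/R0]_(i <- r) ms_d (F i) (G i).
Proof.
case: r => // i r _; elim: r i => [|j r IH] i.
  by rewrite big_cons big_nil /=; lra.
rewrite big_cons.
have -> : sgsum d0 (map F [:: i, j & r]) = ms_add (F i) (sgsum d0 (map F (j :: r))).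
  exact: sgsum_cons.
have -> : sgsum d0 (map G [:: i, j & r]) = ms_add (G i) (sgsum d0 (map G (j :: r))).
  exact: sgsum_cons.
by apply: Rle_trans (ms_d_add_le _ _ _ _) _; apply: Rplus_le_compat_l.
Qed.

Lemma ms_d_cancel (e o p q : M) : ms_add e q = ms_add o p -> ms_d e o = ms_d p q.
Proof.
by move=> eq_sums; rewrite -(ms_d_trans e o q) eq_sums (ms_addC o p) (ms_addC o q) ms_d_trans.
Qed.

Lemma ms_d_sgsum_exchange_le (T : eqType) (F : T -> M) I (r : seq I)
    (s t : seq T) (Ge Go : I -> seq T) :
  s <> [::] -> t <> [::] -> r <> [::] ->
  (forall i, Ge i <> [::]) -> (forall i, Go i <> [::]) ->
  perm_eq (s ++ flatten (map Go r)) (t ++ flatten (map Ge r)) ->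
  ms_d (sgsum d0 (map F s)) (sgsum d0 (map F t)) <=
  \big[Rplus/R0]_(i <- r) ms_d (sgsum d0 (map F (Ge i))) (sgsum d0 (map F (Go i))).
Proof.
move=> s_ne t_ne r_ne Ge_ne Go_ne perm_st.
have st_ne : s ++ flatten (map Go r) <> [::] by case: s s_ne {perm_st}.
move: (sgsum_perm F perm_st st_ne).
rewrite !map_cat !map_flatten -!map_comp !sgsum_cat ?sgsum_flatten //.
  by move=> /ms_d_cancel ->; apply: ms_d_sgsum_le.
all: by [apply: map_neq_nil | move=> i; apply: map_neq_nil
        | apply: flatten_map_neq_nil => // i; apply: map_neq_nil].
Qed.

End MetricSemigroupSums.

Section Subrectangles.
Variables (n : nat) (x x' y : pt n).

Definition code_pt (g : code n) : pt n :=
  fun i => if g i == 0%N then x i else if g i == 1%N then x' i else y i.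

Lemma corner_code_pt th : padd x (smul th (psub y x)) = code_pt (corner_code th).
Proof.
apply: functional_extensionality => i.
rewrite /padd /smul /psub /code_pt /corner_code ffunE.
by case: (th i) => /=; lra.
Qed.

Lemma sub_code_pt al th : mle (lam x x') al -> mle al (mu x' y) ->
  padd (lo x x' al) (smul th (psub (hi x' y al) (lo x x' al))) =
  code_pt (sub_code (lam x x') (mu x' y) al th).
Proof.
move=> le_lam_al le_al_mu; apply: functional_extensionality => i.
move: (le_lam_al i) (le_al_mu i).
rewrite /lo /hi /padd /smul /psub /code_pt /sub_code /sub_coord /lam /mu !ffunE.
by case: Req_EM_T => ?; case: Req_EM_T => ?; case: (al i); case: (th i) => //= _ _; lra.
Qed.

Lemma md_corner_codes (M : MetricSemigroup) (f : pt n -> M) :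
  md f x y = ms_d (sgsum (f x) [seq f (code_pt (corner_code th)) | th <- Ecal n])
                  (sgsum (f x) [seq f (code_pt (corner_code th)) | th <- Ocal n]).
Proof.
by rewrite /md; congr (ms_d (sgsum _ _) (sgsum _ _)); apply: eq_map => th;
  rewrite corner_code_pt.
Qed.

Lemma md_sub_codes (M : MetricSemigroup) (f : pt n -> M) al :
  mle (lam x x') al -> mle al (mu x' y) ->
  md f (lo x x' al) (hi x' y al) =
  ms_d (sgsum (f (lo x x' al))
          [seq f (code_pt (sub_code (lam x x') (mu x' y) al th)) | th <- Ecal n])
       (sgsum (f (lo x x' al))
          [seq f (code_pt (sub_code (lam x x') (mu x' y) al th)) | th <- Ocal n]).
Proof.
by move=> le_lam_al le_al_mu; rewrite /md; congr (ms_d (sgsum _ _) (sgsum _ _));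
  apply: eq_map => th; rewrite sub_code_pt.
Qed.

Lemma inIo_lo_hi_disjoint al be : al <> be ->
  ~ (exists z, inIo (lo x x' al) (hi x' y al) z /\ inIo (lo x x' be) (hi x' y be) z).
Proof.
move=> neq_al_be [z [z_al z_be]].
have [i /= neq_i|eq_al_be] := pickP (fun i => al i != be i); last first.
  by apply: neq_al_be; apply/ffunP => i; apply/eqP/negbFE/eq_al_be.
move: (z_al i) (z_be i) neq_i; rewrite /lo /hi /padd /smul /psub.
by case: (al i); case: (be i) => //= ? ? _; lra.
Qed.

Hypotheses (lt_xy : forall i, x i < y i) (x'_in : inI x y x').

Lemma lam_le_mu : mle (lam x x') (mu x' y).
Proof.
move=> i; move: (lt_xy i) (x'_in i); rewrite /lam /mu !ffunE.
by case: Req_EM_T => ?; case: Req_EM_T => ? //= ? ?; lra.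
Qed.

Lemma lo_lt_hi al : mle (lam x x') al -> mle al (mu x' y) ->
  forall i, lo x x' al i < hi x' y al i.
Proof.
move=> le_lam_al le_al_mu i; move: (le_lam_al i) (le_al_mu i) (lt_xy i) (x'_in i).
rewrite /lo /hi /padd /smul /psub /lam /mu !ffunE.
by case: Req_EM_T => ?; case: Req_EM_T => ?; case: (al i) => //= _ _ ? ?; lra.
Qed.

Lemma inI_subrectangles z : inI x y z <->
  exists al, mle (lam x x') al /\ mle al (mu x' y) /\ inI (lo x x' al) (hi x' y al) z.
Proof.
split=> [z_in|[al [le_lam_al [le_al_mu z_in]]] i].
  (* in direction [i], take the lower piece iff [z_i < x'_i] *)
  exists [ffun i => if Rlt_dec (z i) (x' i) then false else mu x' y i].
  split; [|split] => i; move: (z_in i) (lt_xy i) (x'_in i);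
    rewrite /lo /hi /padd /smul /psub /lam /mu !ffunE;
    by case: (Req_EM_T (x i) (x' i)) => ?; case: (Req_EM_T (x' i) (y i)) => ?;
       case: (Rlt_dec (z i) (x' i)) => ? //= ? ? ?; lra.
move: (le_lam_al i) (le_al_mu i) (z_in i) (lt_xy i) (x'_in i).
rewrite /lo /hi /padd /smul /psub /lam /mu !ffunE.
by case: Req_EM_T => ?; case: Req_EM_T => ?; case: (al i) => //= _ _ ? ? ?; lra.
Qed.

Lemma md_le_sum_md_subrectangles (M : MetricSemigroup) (f : pt n -> M) :
  (0 < n)%N ->
  md f x y <=
  \big[Rplus/R0]_(al : mind n | [forall i, (lam x x' i <= al i <= mu x' y i)%N])
     md f (lo x x' al) (hi x' y al).
Proof.
move=> n_gt0; set lm := lam x x'; set mm := mu x' y.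
pose F g := f (code_pt g).
rewrite md_corner_codes -big_filter -/(box lm mm) !(map_comp F (@corner_code n)).
rewrite (eq_big_seq (fun al =>
  ms_d (sgsum (f x) (map F (map (sub_code lm mm al) (Ecal n))))
       (sgsum (f x) (map F (map (sub_code lm mm al) (Ocal n)))))).
  apply: ms_d_sgsum_exchange_le; last exact: perm_corner_codes lam_le_mu.
  - exact/map_neq_nil/Ecal_neq_nil.
  - exact/map_neq_nil/Ocal_neq_nil.
  - by have := box_lam lam_le_mu; case: (box lm mm).
  - by move=> al; apply/map_neq_nil/Ecal_neq_nil.
  - by move=> al; apply/map_neq_nil/Ocal_neq_nil.
move=> al; rewrite mem_filter => /andP [/forallP al_in _].
have le_lm_al : mle lm al by move=> i; case/andP: (al_in i).
have le_al_mm : mle al mm by move=> i; case/andP: (al_in i).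
rewrite md_sub_codes // -!map_comp.
by congr ms_d; apply: sgsum_default; apply/map_neq_nil; [apply: Ecal_neq_nil | apply: Ocal_neq_nil].
Qed.

End Subrectangles.

Theorem lemma11 (M : MetricSemigroup) (n : nat) (hn : (0 < n)%N)
  (a b : pt n) (hab : forall i, (a i < b i))
  (f : pt n -> M) (x y x' : pt n)
  (hx : inI a b x) (hy : inI a b y) (hxy : forall i, (x i < y i))
  (hx' : inI x y x') :
  mle (lam x x') (mu x' y) /\
  (forall z, inI x y z <->
     exists al : mind n, mle (lam x x') al /\ mle al (mu x' y) /\
                         inI (lo x x' al) (hi x' y al) z) /\
  (forall al : mind n, mle (lam x x') al -> mle al (mu x' y) ->
     forall i, (lo x x' al i < hi x' y al i)) /\
  (forall al be : mind n, mle (lam x x') al -> mle al (mu x' y) ->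
     mle (lam x x') be -> mle be (mu x' y) -> al <> be ->
     ~ (exists z, inIo (lo x x' al) (hi x' y al) z /\ inIo (lo x x' be) (hi x' y be) z)) /\
  (md f x y <=
     \big[Rplus/R0]_(al : mind n | [forall i, (lam x x' i <= al i <= mu x' y i)%N])
        md f (lo x x' al) (hi x' y al)).
Proof.
split; first exact: lam_le_mu.
split; first exact: inI_subrectangles.
split; first exact: lo_lt_hi.
split; first by move=> al be _ _ _ _; apply: inIo_lo_hi_disjoint.
exact: md_le_sum_md_subrectangles.
Qed.
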